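(* Every instance of Leivant's principle $\Box(B\vee C)\to\Box(\Box B\vee C)$ is derivable in $\mathsf{iK4}$ extended by the schema $\mathsf{Le}^+$ (i.e. $\mathsf{iK4}\vdash\mathsf{Le}^+\to\mathsf{Le}$).
   Context: Modal language: propositional variables, $\bot$, $\wedge,\vee,\to$, $\Box$; atomic = variables and $\bot$; $\boxdot A:=A\wedge\Box A$. $\mathsf{iK4}$: intuitionistic propositional logic in the modal language plus $\Box(A\to B)\to(\Box A\to\Box B)$ and $\Box A\to\Box\Box A$, closed under modus ponens and necessitation. $\mathsf{NOI}$: propositions in which every $\to$ lies in the scope of a $\Box$. Leivant's translation: $A^l=A$ for atomic/boxed $A$; $(A\wedge B)^l=A^l\wedge B^l$; $(A\vee B)^l=\boxdot A^l\vee\boxdot B^l$; $(A\to B)^l=A\to B^l$ if $A\in\mathsf{NOI}$, else $A\to B$. $\mathsf{Le}^+$ is the schema $\Box A\to\Box A^l$; $\mathsf{Le}$ is the schema $\Box(B\vee C)\to\Box(\Box B\vee C)$. *)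

From Stdlib Require Import Bool.

Inductive form : Type :=
| Var : nat -> form
| Bot : form
| And : form -> form -> form
| Or  : form -> form -> form
| Imp : form -> form -> form
| Box : form -> form.

Definition boxdot (A : form) : form := And A (Box A).

Fixpoint noi (A : form) : bool :=
  match A with
  | Var _ => true
  | Bot => true
  | And B C => noi B && noi C
  | Or B C => noi B && noi C
  | Imp _ _ => false
  | Box _ => true
  end.

Fixpoint leiv (A : form) : form :=
  match A with
  | Var n => Var n
  | Bot => Bot
  | Box B => Box B
  | And B C => And (leiv B) (leiv C)
  | Or B C => Or (boxdot (leiv B)) (boxdot (leiv C))
  | Imp B C => if noi B then Imp B (leiv C) else Imp B C
  end.

Inductive iK4Lep : form -> Prop :=
| ax_K1 A B : iK4Lep (Imp A (Imp B A))
| ax_S A B C : iK4Lep (Imp (Imp A (Imp B C)) (Imp (Imp A B) (Imp A C)))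
| ax_andE1 A B : iK4Lep (Imp (And A B) A)
| ax_andE2 A B : iK4Lep (Imp (And A B) B)
| ax_andI A B : iK4Lep (Imp A (Imp B (And A B)))
| ax_orI1 A B : iK4Lep (Imp A (Or A B))
| ax_orI2 A B : iK4Lep (Imp B (Or A B))
| ax_orE A B C : iK4Lep (Imp (Imp A C) (Imp (Imp B C) (Imp (Or A B) C)))
| ax_efq A : iK4Lep (Imp Bot A)
| ax_boxK A B : iK4Lep (Imp (Box (Imp A B)) (Imp (Box A) (Box B)))
| ax_box4 A : iK4Lep (Imp (Box A) (Box (Box A)))
| ax_LeP A : iK4Lep (Imp (Box A) (Box (leiv A)))
| r_mp A B : iK4Lep (Imp A B) -> iK4Lep A -> iK4Lep B
| r_nec A : iK4Lep A -> iK4Lep (Box A).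


(* Le^+ turns Box (B \/ C) into Box (boxdot B^l \/ boxdot C^l).  Every
   translation implies its original, A^l -> A, so inside the box the left
   disjunct yields Box B (from Box B^l) and the right one yields C. *)

Lemma imp_refl A : iK4Lep (Imp A A).
Proof.
  eapply r_mp; [eapply r_mp; [apply (ax_S A (Imp A A) A) | apply ax_K1] |].
  apply (ax_K1 A A).
Qed.

Lemma imp_trans A B C :
  iK4Lep (Imp A B) -> iK4Lep (Imp B C) -> iK4Lep (Imp A C).
Proof.
  intros HAB HBC.
  eapply r_mp; [eapply r_mp; [apply (ax_S A B C) |] | exact HAB].
  eapply r_mp; [apply ax_K1 | exact HBC].
Qed.

Lemma imp_mono_r A C C' :
  iK4Lep (Imp C C') -> iK4Lep (Imp (Imp A C) (Imp A C')).
Proof.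
  intros HC. eapply r_mp; [apply ax_S |].
  eapply r_mp; [apply ax_K1 | exact HC].
Qed.

Lemma and_intro X A B :
  iK4Lep (Imp X A) -> iK4Lep (Imp X B) -> iK4Lep (Imp X (And A B)).
Proof.
  intros HA HB.
  eapply r_mp; [eapply r_mp; [apply ax_S | eapply imp_trans; [exact HA | apply ax_andI]] | exact HB].
Qed.

Lemma and_mono A A' B B' :
  iK4Lep (Imp A A') -> iK4Lep (Imp B B') -> iK4Lep (Imp (And A B) (And A' B')).
Proof.
  intros HA HB. apply and_intro.
  - eapply imp_trans; [apply ax_andE1 | exact HA].
  - eapply imp_trans; [apply ax_andE2 | exact HB].
Qed.

Lemma or_mono A A' B B' :
  iK4Lep (Imp A A') -> iK4Lep (Imp B B') -> iK4Lep (Imp (Or A B) (Or A' B')).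
Proof.
  intros HA HB. eapply r_mp; [eapply r_mp; [apply ax_orE |] |].
  - eapply imp_trans; [exact HA | apply ax_orI1].
  - eapply imp_trans; [exact HB | apply ax_orI2].
Qed.

Lemma box_mono A B : iK4Lep (Imp A B) -> iK4Lep (Imp (Box A) (Box B)).
Proof. intros HAB. eapply r_mp; [apply ax_boxK | apply r_nec; exact HAB]. Qed.

Lemma boxdot_elim A : iK4Lep (Imp (boxdot A) A).
Proof. apply ax_andE1. Qed.

Lemma boxdot_box A : iK4Lep (Imp (boxdot A) (Box A)).
Proof. apply ax_andE2. Qed.

Lemma leiv_imp A : iK4Lep (Imp (leiv A) A).
Proof.
  induction A as [n | | A IHA B IHB | A IHA B IHB | A IHA B IHB | A IHA]; simpl.
  - apply imp_refl.
  - apply imp_refl.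
  - apply and_mono; assumption.
  - apply or_mono; eapply imp_trans; [apply boxdot_elim | exact IHA
                                     | apply boxdot_elim | exact IHB].
  - destruct (noi A); [apply imp_mono_r; exact IHB | apply imp_refl].
  - apply imp_refl.
Qed.

Theorem lemma4p19 : forall B C : form,
  iK4Lep (Imp (Box (Or B C)) (Box (Or (Box B) C))).
Proof.
  intros B C.
  eapply imp_trans; [apply (ax_LeP (Or B C)) | simpl; apply box_mono].
  apply or_mono.
  - eapply imp_trans; [apply boxdot_box | apply box_mono, leiv_imp].
  - eapply imp_trans; [apply boxdot_elim | apply leiv_imp].
Qed.
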